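(* Let $n\ge1$, $a\in[-\infty,+\infty)$, $b\in(-\infty,+\infty]$ with $a\le b$, and $\mathbf y\in\mathbb R^n$. Let $\boldsymbol\theta^*$ be the unique minimizer of $\|\mathbf y-\mathbf v\|_2^2$ over $\mathbf v\in\mathcal S_n^\uparrow$, and $\boldsymbol\theta$ the unique minimizer of $\|\mathbf y-\mathbf v\|_2^2$ over $\mathbf v\in\mathcal S_n^\uparrow(a,b)$, where $\mathcal S_n^\uparrow(a,b)=\{\mathbf v\in\mathcal S_n^\uparrow: a\le v_1,\ v_n\le b\}$. Then $k(\boldsymbol\theta)\le k(\boldsymbol\theta^* )$.
   Context: $\mathcal S_n^\uparrow=\{\mathbf u\in\mathbb R^n:u_1\le\dots\le u_n\}$. For $\mathbf u\in\mathbb R^n$, $k(\mathbf u)=|\{u_1,\dots,u_n\}|$, the number of distinct values of $\mathbf u$. *)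

From HB Require Import structures.
From mathcomp Require Import all_boot all_order all_algebra.
Set Implicit Arguments. Unset Strict Implicit. Unset Printing Implicit Defensive.
Import Order.TTheory GRing.Theory Num.Theory.
Local Open Scope ring_scope.

Definition nondecr (R : realFieldType) (n : nat) (u : 'I_n -> R) : Prop :=
  forall i j : 'I_n, (i <= j)%N -> u i <= u j.

Definition kdist (R : realFieldType) (n : nat) (u : 'I_n -> R) : nat :=
  size (undup [seq u i | i <- enum 'I_n]).

Definition sqdist (R : realFieldType) (n : nat) (y v : 'I_n -> R) : R :=
  \sum_(i < n) (y i - v i) ^+ 2.

(* Extended bounds: a = None means a = -oo ; b = None means b = +oo. *)
Definition lower_ok (R : realFieldType) (a : option R) (x : R) : Prop :=
  match a with None => True | Some a' => a' <= x end.
Definition upper_ok (R : realFieldType) (b : option R) (x : R) : Prop :=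
  match b with None => True | Some b' => x <= b' end.
Definition bounds_le (R : realFieldType) (a b : option R) : Prop :=
  match a, b with Some a', Some b' => a' <= b' | _, _ => True end.

Definition nondecr_ab (R : realFieldType) (n : nat) (a b : option R)
    (v : 'I_n.+1 -> R) : Prop :=
  nondecr v /\ lower_ok a (v ord0) /\ upper_ok b (v ord_max).

Definition is_minimizer (R : realFieldType) (n : nat) (C : ('I_n -> R) -> Prop)
    (y t : 'I_n -> R) : Prop :=
  C t /\ forall v, C v -> sqdist y t <= sqdist y v.

(* The bounded projection is the pointwise clipping of the unbounded one:
   theta_i = min(b, max(a, theta*_i)).  Indeed, the clipped vector is
   nondecreasing and lies in S(a,b), and it satisfies the obtuse-angle
   characterization <y - c, v - c> <= 0 for every v in S(a,b): this follows
   from the same inequality for theta* (tested against v + theta* - c, which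
   is nondecreasing because x - clip x is) and from the projection property
   of clipping onto [a, b].  Hence theta is a function of theta*, and
   applying a function cannot increase the number of distinct values. *)

From HB Require Import structures.
From mathcomp Require Import all_boot all_order all_algebra.
From mathcomp Require Import ring lra.
Set Implicit Arguments. Unset Strict Implicit. Unset Printing Implicit Defensive.
Import Order.TTheory GRing.Theory Num.Theory.
Local Open Scope ring_scope.

Section Projection.
Variables (R : realFieldType) (n : nat).
Implicit Types (y u v w : 'I_n -> R) (C : ('I_n -> R) -> Prop).

Definition convex_set C :=
  forall u v (s : R), C u -> C v -> 0 <= s <= 1 ->
    C (fun i => u i + s * (v i - u i)).

Lemma sqdist_polar y v w :
  sqdist y v = sqdist y w - 2 * \sum_(i < n) (y i - w i) * (v i - w i)
               + sqdist v w.
Proof.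
rewrite /sqdist mulr_sumr -sumrN -!big_split /=.
by apply: eq_bigr => i _; ring.
Qed.

Lemma sqdist_ge0 u v : 0 <= sqdist u v.
Proof. by apply: sumr_ge0 => i _; exact: sqr_ge0. Qed.

Lemma sqdist_le0 u v : sqdist u v <= 0 -> u =1 v.
Proof.
move=> huv i; apply/eqP; rewrite -subr_eq0 -sqrf_eq0 eq_le sqr_ge0 andbT.
apply: le_trans huv; rewrite /sqdist (bigD1 i) //= lerDl.
by apply: sumr_ge0 => j _; exact: sqr_ge0.
Qed.

Lemma minimizer_obtuse C y t : convex_set C -> is_minimizer C y t ->
  forall u, C u -> \sum_(i < n) (y i - t i) * (u i - t i) <= 0.
Proof.
move=> convC [Ct t_min] u Cu.
set P := \sum_(i < n) _; set Q := sqdist u t.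
have Q_ge0 : 0 <= Q := sqdist_ge0 u t.
rewrite leNgt; apply/negP => P_gt0.
have PQ_gt0 : 0 < P + Q by lra.
pose s := P / (P + Q).
have s_gt0 : 0 < s by rewrite divr_gt0.
have s_le1 : s <= 1 by rewrite ler_pdivrMr //; lra.
have sPQ : s * (P + Q) = P by rewrite mulfVK // gt_eqF.
pose w i := t i + s * (u i - t i).
have s01 : 0 <= s <= 1 by rewrite ltW.
have := t_min w (convC _ _ _ Ct Cu s01).
rewrite (sqdist_polar y w t).
have -> : \sum_(i < n) (y i - t i) * (w i - t i) = s * P.
  by rewrite mulr_sumr; apply: eq_bigr => i _; rewrite /w; ring.
have -> : sqdist w t = s ^+ 2 * Q.
  by rewrite /Q /sqdist mulr_sumr; apply: eq_bigr => i _; rewrite /w; ring.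
(* minimality gives 2 P <= s Q = P - s P < P *)
move=> h; have : 0 <= s * (s * Q - 2 * P) by nra.
rewrite pmulr_rge0 //; nra.
Qed.

Lemma obtuse_minimizer_eq C y c t :
  (forall v, C v -> \sum_(i < n) (y i - c i) * (v i - c i) <= 0) ->
  C c -> is_minimizer C y t -> t =1 c.
Proof.
move=> c_obtuse Cc [Ct t_min]; apply: sqdist_le0.
have := t_min c Cc; rewrite (sqdist_polar y t c).
have := c_obtuse t Ct; lra.
Qed.

Lemma kdist_comp u (f : R -> R) : (kdist (fun i => f (u i)) <= kdist u)%N.
Proof.
rewrite /kdist -[X in (_ <= X)%N](size_map f).
apply: uniq_leq_size; first exact: undup_uniq.
move=> x; rewrite mem_undup => /mapP [i i_n ->].
by apply: map_f; rewrite mem_undup map_f.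
Qed.

End Projection.

Section Clipping.
Variable R : realFieldType.
Implicit Types (a b : option R) (x z w : R).

Definition clamp_lo a x := if a is Some a' then (if x < a' then a' else x) else x.
Definition clamp_hi b x := if b is Some b' then (if b' < x then b' else x) else x.
Definition clip a b x := clamp_hi b (clamp_lo a x).

Ltac case_lt := repeat match goal with
  | |- context [if ?x < ?y then _ else _] =>
      lazymatch x with context [if _ then _ else _] => fail | _ => idtac end;
      lazymatch y with context [if _ then _ else _] => fail | _ => idtac end;
      case: (ltP x y) => ?
  end.

Ltac unfold_clip a b :=
  rewrite /clip /clamp_hi /clamp_lo ?/lower_ok ?/upper_ok ?/bounds_le;
  case: a => [?|]; case: b => [?|] //=; case_lt.

Lemma clip_nondecr a b x z : x <= z -> clip a b x <= clip a b z.
Proof. by move=> ?; unfold_clip a b; lra. Qed.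

Lemma sub_clip_nondecr a b x z : x <= z -> x - clip a b x <= z - clip a b z.
Proof. by move=> ?; unfold_clip a b; lra. Qed.

Lemma clip_in_bounds a b x : bounds_le a b ->
  lower_ok a (clip a b x) /\ upper_ok b (clip a b x).
Proof. by unfold_clip a b; move=> *; split; lra. Qed.

Lemma clip_obtuse a b x w : lower_ok a w -> upper_ok b w ->
  (x - clip a b x) * (w - clip a b x) <= 0.
Proof. by unfold_clip a b; move=> *; nra. Qed.

Lemma nondecr_convex n : convex_set (@nondecr R n).
Proof.
move=> u v s u_nd v_nd /andP[s_ge0 s_le1] i j ij.
by have := u_nd i j ij; have := v_nd i j ij; nra.
Qed.

Lemma nondecr_ab_bounds m a b (v : 'I_m.+1 -> R) : nondecr_ab a b v ->
  forall i, lower_ok a (v i) /\ upper_ok b (v i).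
Proof.
move=> [v_nd [v_lo v_hi]] i; split.
- by case: a v_lo => //= a' /le_trans; apply; apply: v_nd.
- by case: b v_hi => //= b' le_v; apply: le_trans le_v; apply: v_nd; rewrite -ltnS.
Qed.

Lemma nondecr_ab_clip m a b (u : 'I_m.+1 -> R) : bounds_le a b -> nondecr u ->
  nondecr_ab a b (fun i => clip a b (u i)).
Proof.
move=> ab u_nd; split; first by move=> i j ij; apply/clip_nondecr/u_nd.
by split; [apply: (clip_in_bounds _ ab).1 | apply: (clip_in_bounds _ ab).2].
Qed.

Lemma clip_projection_obtuse m a b (y t : 'I_m.+1 -> R) :
  is_minimizer (@nondecr R m.+1) y t ->
  forall v, nondecr_ab a b v ->
  \sum_(i < m.+1) (y i - clip a b (t i)) * (v i - clip a b (t i)) <= 0.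
Proof.
move=> t_min v v_ab; set c := fun i => clip a b (t i).
pose u i := v i + (t i - c i).
have u_nd : nondecr u.
  move=> i j ij; have := v_ab.1 i j ij.
  have := sub_clip_nondecr a b (t_min.1 i j ij); rewrite /u /c; lra.
have t_obtuse := minimizer_obtuse (@nondecr_convex _) t_min u_nd.
have c_obtuse : \sum_(i < m.+1) (t i - c i) * (v i - c i) <= 0.
  rewrite -oppr_ge0 -sumrN; apply: sumr_ge0 => i _; rewrite oppr_ge0.
  by have [? ?] := nondecr_ab_bounds v_ab i; apply: clip_obtuse.
suff -> : \sum_(i < m.+1) (y i - c i) * (v i - c i) =
  \sum_(i < m.+1) (y i - t i) * (u i - t i) +
  \sum_(i < m.+1) (t i - c i) * (v i - c i) by lra.
by rewrite -big_split; apply: eq_bigr => i _; rewrite /u /=; ring.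
Qed.

End Clipping.

Theorem mainTheorem4 (R : realFieldType) (m : nat) (a b : option R)
    (y thetastar theta : 'I_m.+1 -> R) :
  bounds_le a b ->
  is_minimizer (@nondecr R m.+1) y thetastar ->
  is_minimizer (nondecr_ab a b) y theta ->
  (kdist theta <= kdist thetastar)%N.
Proof.
move=> ab thetastar_min theta_min.
have theta_clip : theta =1 (fun i => clip a b (thetastar i)).
  apply: obtuse_minimizer_eq theta_min.
  - exact: clip_projection_obtuse.
  - exact: nondecr_ab_clip ab thetastar_min.1.
by rewrite /kdist (eq_map theta_clip); apply: kdist_comp.
Qed.
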